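(* Let $H_m$ and $H_n$ be complex Hadamard matrices of orders $m$ and $n$, and let $H=H_m\otimes H_n$ (of order $mn$). Let $R_1$ be the set of the first $n$ rows of $H$ and $R$ the set of the remaining rows. For $1\le i\le n$ let $C_i$ be the set of the $m$ columns of $H$ with indices $i, n+i, 2n+i,\dots,(m-1)n+i$, and let $M_{1i}$ be the submatrix of $H$ with rows $R_1$ and columns $C_i$. Then $\{C_1,\dots,C_n\}$ is a partition of the columns, $\{R,R_1\}$ is a partition of the rows, and for all $i\neq j$ every column of $M_{1i}$ is orthogonal to every column of $M_{1j}$. Consequently, for every $i$ and every $a\in\mathbb{T}$, the matrix obtained from $H$ by replacing $M_{1i}$ with $aM_{1i}$ is a complex Hadamard matrix (so $H$ admits infinitely many such switchings).
   Context: $\mathbb{T}$ is the set of complex numbers of modulus $1$. A complex Hadamard matrix of order $n$ is an $n\times n$ matrix with all entries in $\mathbb{T}$ and $HH^{\ast}=nI_n$. The Kronecker product is $A\otimes B=[a_{ij}B]$, so the first $n$ rows of $H_m\otimes H_n$ consist of the $m$ blocks $(H_m)_{1j}H_n$ placed side by side. *)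

(* Complex numbers: an arbitrary numClosedFieldType C
   (e.g. the complex numbers); conjugation is Num.conj (notation x^* ). *)
From HB Require Import structures.
From mathcomp Require Import all_boot all_order all_algebra.
Set Implicit Arguments. Unset Strict Implicit. Unset Printing Implicit Defensive.
Import Order.TTheory GRing.Theory Num.Theory.
Local Open Scope ring_scope.

Definition adjmx (C : numClosedFieldType) (p q : nat) (A : 'M[C]_(p, q)) :
  'M[C]_(q, p) := (map_mx Num.conj A)^T.

Definition complex_hadamard (C : numClosedFieldType) (n : nat) (H : 'M[C]_n) :=
  (forall i j, `|H i j| = 1) /\ H *m adjmx H = n%:R%:M.

Lemma kron_div_lt (m n : nat) (i : 'I_(m * n)) : (i %/ n < m)%N.
Proof.
case: n i => [|n] i; first by case: i => k; rewrite muln0.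
by rewrite ltn_divLR // ltn_ord.
Qed.

Lemma kron_mod_lt (m n : nat) (i : 'I_(m * n)) : (i %% n < n)%N.
Proof.
case: n i => [|n] i; first by case: i => k; rewrite muln0.
by rewrite ltn_mod.
Qed.

(* block index and in-block index of an index of 'I_(m*n) (0-based):
   i = (kdiv i) * n + (kmod i) *)
Definition kdiv (m n : nat) (i : 'I_(m * n)) : 'I_m := Ordinal (kron_div_lt i).
Definition kmod (m n : nat) (i : 'I_(m * n)) : 'I_n := Ordinal (kron_mod_lt i).

Definition kron (R : pzRingType) (m n : nat) (A : 'M[R]_m) (B : 'M[R]_n) :
  'M[R]_(m * n) :=
  \matrix_(i, j) (A (kdiv i) (kdiv j) * B (kmod i) (kmod j)).

Definition rowsR1 (m n : nat) : {set 'I_(m * n)} := [set r : 'I_(m * n) | (r < n)%N].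
Definition rowsR (m n : nat) : {set 'I_(m * n)} := ~: rowsR1 m n.
(* C_i (0-based i < n): the columns i, n+i, ..., (m-1)n+i *)
Definition colsC (m n : nat) (i : 'I_n) : {set 'I_(m * n)} :=
  [set c : 'I_(m * n) | (c %% n == i)%N].

Definition switch (C : numClosedFieldType) (m n : nat) (H : 'M[C]_(m * n))
  (i : 'I_n) (a : C) : 'M[C]_(m * n) :=
  \matrix_(r, c) (if (r \in rowsR1 m n) && (c \in colsC m i)
                  then a * H r c else H r c).

(* Index the rows and columns of H_m (x) H_n by pairs (k, l) <-> k n + l.
   Then the Gram matrices factor, (A (x) B)(A' (x) B')^* = (A A'^* ) (x) (B B'^* ),
   so H is Hadamard; and on the first n rows (k = 0) the inner product of the
   columns (k, i) and (k', j) is H_m(0,k) conj(H_m(0,k')) times the inner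
   product of the columns i and j of H_n, which vanishes for i <> j.
   Multiplying the block (rows R, columns S) of a Hadamard matrix by a
   unimodular a leaves the column Gram matrix H^* H unchanged as soon as every
   column in S is orthogonal on R to every column outside S; as H^* H = n I is
   equivalent to H H^* = n I, the switched matrix is again Hadamard. *)

From HB Require Import structures.
From mathcomp Require Import all_boot all_order all_algebra.
Import Order.TTheory GRing.Theory Num.Theory.
Local Open Scope ring_scope.
Set Implicit Arguments. Unset Strict Implicit.

Section KronIndex.
Variables m n : nat.

Lemma kidx_lt (k : 'I_m) (l : 'I_n) : (k * n + l < m * n)%N.
Proof.
apply: (@leq_trans (k.+1 * n)); first by rewrite mulSn addnC ltn_add2r.
by rewrite leq_mul2r ltn_ord orbT.
Qed.

Definition kidx (k : 'I_m) (l : 'I_n) : 'I_(m * n) := Ordinal (kidx_lt k l).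

Lemma kdiv_kidx k l : kdiv (kidx k l) = k.
Proof.
apply: val_inj => /=; have n_gt0 : (0 < n)%N by case: (n) l => [[]|].
by rewrite divnMDl // divn_small ?addn0.
Qed.

Lemma kmod_kidx k l : kmod (kidx k l) = l.
Proof. by apply: val_inj; rewrite /= modnMDl modn_small. Qed.

Lemma kidxK (c : 'I_(m * n)) : kidx (kdiv c) (kmod c) = c.
Proof. by apply: val_inj; rewrite /= -divn_eq. Qed.

Lemma eq_kidx (r s : 'I_(m * n)) :
  (r == s) = (kdiv r == kdiv s) && (kmod r == kmod s).
Proof.
apply/eqP/andP => [-> | [/eqP e1 /eqP e2]]; first by rewrite !eqxx.
by rewrite -[r]kidxK -[s]kidxK e1 e2.
Qed.

Lemma big_kidx (R : Type) (idx : R) (op : Monoid.com_law idx)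
    (F : 'I_(m * n) -> R) :
  \big[op/idx]_c F c = \big[op/idx]_(k < m) \big[op/idx]_(l < n) F (kidx k l).
Proof.
rewrite pair_bigA (reindex (fun p : 'I_m * 'I_n => kidx p.1 p.2)) //.
by exists (fun c => (kdiv c, kmod c)) => [[k l] _ | c _];
  rewrite /= ?kdiv_kidx ?kmod_kidx ?kidxK.
Qed.

Lemma in_colsC (i : 'I_n) (c : 'I_(m * n)) : (c \in colsC m i) = (kmod c == i).
Proof. by rewrite inE. Qed.

Lemma colsCE (i : 'I_n) : colsC m i = [set kidx k i | k : 'I_m].
Proof.
apply/setP => c; rewrite in_colsC.
apply/eqP/imsetP => [<- | [k _ ->]]; last exact: kmod_kidx.
by exists (kdiv c); rewrite ?kidxK.
Qed.

Lemma card_colsC (i : 'I_n) : #|colsC m i| = m.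
Proof.
rewrite colsCE card_imset ?card_ord // => k k' e.
by rewrite -(kdiv_kidx k i) e kdiv_kidx.
Qed.

Hypothesis m_gt0 : (0 < m)%N.

Lemma colsC_inj : injective (@colsC m n).
Proof.
move=> i j /setP/(_ (kidx (Ordinal m_gt0) i)).
by rewrite !in_colsC kmod_kidx eqxx => /esym/eqP.
Qed.

Lemma colsC_partition : partition [set colsC m i | i : 'I_n] [set: 'I_(m * n)].
Proof.
apply/and3P; split.
- rewrite cover_imset; apply/eqP/setP => c; rewrite inE.
  by apply/bigcupP; exists (kmod c); rewrite ?in_colsC.
- apply/trivIsetP => _ _ /imsetP[i _ ->] /imsetP[j _ ->] ne_ij.
  apply/pred0P => c /=; rewrite !in_colsC.
  by apply: contraNF ne_ij => /andP[/eqP <- /eqP <-].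
- apply/imsetP => -[i _ /setP/(_ (kidx (Ordinal m_gt0) i))].
  by rewrite in_set0 in_colsC kmod_kidx eqxx.
Qed.

Lemma rowsR1E : rowsR1 m n = [set kidx (Ordinal m_gt0) l | l : 'I_n].
Proof.
apply/setP => r; rewrite inE; apply/idP/imsetP => [r_lt_n | [l _ ->]] /=.
  exists (kmod r) => //; apply: val_inj; rewrite /= mul0n add0n.
  by rewrite modn_small.
by rewrite mul0n add0n.
Qed.

End KronIndex.

Lemma adjmxE (C : numClosedFieldType) p q (A : 'M[C]_(p, q)) i j :
  adjmx A i j = (A j i)^*.
Proof. by rewrite !mxE. Qed.

Lemma mulmx_scalarC (F : fieldType) n (A B : 'M[F]_n) (c : F) :
  c != 0 -> A *m B = c%:M -> B *m A = c%:M.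
Proof.
move=> c_neq0 AB; have AB1 : A *m (c^-1 *: B) = 1%:M.
  by rewrite -scalemxAr AB scale_scalar_mx mulVf.
by rewrite -[B](scalerKV c_neq0) -scalemxAl (mulmx1C AB1) scale_scalar_mx mulr1.
Qed.

Lemma complex_hadamard_adjmx (C : numClosedFieldType) n (A : 'M[C]_n) :
  complex_hadamard A <->
  (forall i j, `|A i j| = 1) /\ adjmx A *m A = n%:R%:M.
Proof.
rewrite /complex_hadamard; case: n A => [|n] A.
  by split=> -[A1 _]; split; rewrite // !thinmx0.
have n_neq0 : (n.+1%:R : C) != 0 by rewrite pnatr_eq0.
by split=> -[A1 AA]; split=> //; exact: mulmx_scalarC AA.
Qed.

Lemma hadamard_adj_mulmx (C : numClosedFieldType) n (A : 'M[C]_n) :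
  complex_hadamard A -> adjmx A *m A = n%:R%:M.
Proof. by case/complex_hadamard_adjmx. Qed.

Lemma mulmx_kron (R : comPzRingType) m n (A A' : 'M[R]_m) (B B' : 'M[R]_n) :
  kron A B *m kron A' B' = kron (A *m A') (B *m B').
Proof.
apply/matrixP => r s; rewrite !mxE big_kidx mulr_suml; apply: eq_bigr => k _.
rewrite mulr_sumr; apply: eq_bigr => l _.
by rewrite !mxE !kdiv_kidx !kmod_kidx mulrACA.
Qed.

Lemma adjmx_kron (C : numClosedFieldType) m n (A : 'M[C]_m) (B : 'M[C]_n) :
  adjmx (kron A B) = kron (adjmx A) (adjmx B).
Proof. by apply/matrixP => r s; rewrite !mxE rmorphM. Qed.

Lemma kron_scalar (R : pzRingType) m n (a b : R) :
  kron (a%:M : 'M_m) (b%:M : 'M_n) = (a * b)%:M.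
Proof.
apply/matrixP => r s; rewrite !mxE eq_kidx.
by case: eqP; case: eqP; rewrite ?mulr1n ?mulr0n ?mulr0 ?mul0r.
Qed.

Lemma kron_hadamard (C : numClosedFieldType) m n (A : 'M[C]_m) (B : 'M[C]_n) :
  complex_hadamard A -> complex_hadamard B -> complex_hadamard (kron A B).
Proof.
move=> [A1 AA] [B1 BB]; split; first by move=> r s; rewrite mxE normrM A1 B1 mulr1.
by rewrite adjmx_kron mulmx_kron AA BB kron_scalar natrM.
Qed.

Definition scale_block (C : numClosedFieldType) p q (A : 'M[C]_(p, q))
    (rs : {set 'I_p}) (cs : {set 'I_q}) (a : C) : 'M[C]_(p, q) :=
  \matrix_(r, c) (if (r \in rs) && (c \in cs) then a * A r c else A r c).

Section ScaleBlock.
Variables (C : numClosedFieldType) (p q : nat) (A : 'M[C]_(p, q)).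
Variables (rs : {set 'I_p}) (cs : {set 'I_q}) (a : C).
Hypothesis norm_a : `|a| = 1.
Hypothesis block_orth : forall c c', c \in cs -> c' \notin cs ->
  \sum_(r in rs) A r c * (A r c')^* = 0.

Let s c := if c \in cs then a else 1.

Lemma scale_block_in r c : r \in rs -> scale_block A rs cs a r c = s c * A r c.
Proof. by move=> r_in; rewrite mxE r_in /s; case: (c \in cs); rewrite ?mul1r. Qed.

Lemma adj_mulmx_scale_block :
  adjmx (scale_block A rs cs a) *m scale_block A rs cs a = adjmx A *m A.
Proof.
apply/matrixP => c c'; rewrite !mxE (bigID (mem rs)) [RHS](bigID (mem rs)) /=.
congr (_ + _); last by apply: eq_bigr => r /negbTE r_out; rewrite !mxE r_out.
have -> : \sum_(r in rs) adjmx (scale_block A rs cs a) c r *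
             scale_block A rs cs a r c' =
          (s c)^* * s c' * \sum_(r in rs) adjmx A c r * A r c'.
  rewrite mulr_sumr; apply: eq_bigr => r r_in.
  by rewrite !adjmxE !scale_block_in // rmorphM mulrACA.
have [same | mixed] := boolP ((c \in cs) == (c' \in cs)).
  have aa : a^* * a = 1 by rewrite mulrC -normCK norm_a expr1n.
  by rewrite /s (eqP same); case: (c' \in cs); rewrite ?aa ?rmorph1 !mul1r.
suff -> : \sum_(r in rs) adjmx A c r * A r c' = 0 by rewrite mulr0.
case: (boolP (c \in cs)) mixed => c_in; case: (boolP (c' \in cs)) => // c'_in _.
  rewrite (eq_bigr (fun r => (A r c * (A r c')^*)^*)) => [|r _].
    by rewrite -rmorph_sum block_orth // rmorph0.
  by rewrite adjmxE rmorphM /= conjCK.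
rewrite (eq_bigr (fun r => A r c' * (A r c)^*)) => [|r _].
  exact: block_orth.
by rewrite adjmxE mulrC.
Qed.

End ScaleBlock.

Lemma scale_block_hadamard (C : numClosedFieldType) n (A : 'M[C]_n)
    (rs cs : {set 'I_n}) (a : C) :
  `|a| = 1 ->
  (forall c c', c \in cs -> c' \notin cs -> \sum_(r in rs) A r c * (A r c')^* = 0) ->
  complex_hadamard A -> complex_hadamard (scale_block A rs cs a).
Proof.
move=> norm_a block_orth /complex_hadamard_adjmx[A1 AA].
apply/complex_hadamard_adjmx; split; last by rewrite adj_mulmx_scale_block.
by move=> r c; rewrite mxE; case: ifP => _; rewrite ?normrM ?norm_a ?mul1r.
Qed.

Lemma kron_sum_rowsR1 (C : numClosedFieldType) m n (m_gt0 : (0 < m)%N)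
    (A : 'M[C]_m) (B : 'M[C]_n) c c' :
  \sum_(r in rowsR1 m n) kron A B r c * (kron A B r c')^* =
  A (Ordinal m_gt0) (kdiv c) * (A (Ordinal m_gt0) (kdiv c'))^* *
  (adjmx B *m B) (kmod c') (kmod c).
Proof.
rewrite rowsR1E big_imset => [|l l' _ _ /(congr1 (@kmod m n))]; last first.
  by rewrite !kmod_kidx.
rewrite !mxE mulr_sumr; apply: eq_bigr => l _.
by rewrite !mxE !kdiv_kidx !kmod_kidx rmorphM mulrACA [_ * B l _]mulrC.
Qed.

Theorem corollary6p5 (C : numClosedFieldType) (m n : nat)
  (Hm : 'M[C]_m) (Hn : 'M[C]_n) :
  (0 < m)%N -> (0 < n)%N ->
  complex_hadamard Hm -> complex_hadamard Hn ->
  let H := kron Hm Hn in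
  [/\ partition [set colsC m i | i : 'I_n] [set: 'I_(m * n)],
      (forall i j : 'I_n, i != j -> colsC m i != colsC m j),
      (forall i : 'I_n, #|colsC m i| = m),
      (rowsR m n :|: rowsR1 m n = [set: 'I_(m * n)] /\
        rowsR m n :&: rowsR1 m n = set0) &
      ((forall i j : 'I_n, i != j ->
         forall c c', c \in colsC m i -> c' \in colsC m j ->
         \sum_(r in rowsR1 m n) H r c * (H r c')^* = 0) /\
      (forall (i : 'I_n) (a : C), `|a| = 1 ->
         complex_hadamard (switch H i a)))].
Proof.
move=> m_gt0 _ hHm hHn H.
have block_orth i j : i != j -> forall c c', c \in colsC m i -> c' \in colsC m j ->
    \sum_(r in rowsR1 m n) H r c * (H r c')^* = 0.
  move=> ne_ij c c'; rewrite !in_colsC => /eqP c_i /eqP c'_j.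
  rewrite kron_sum_rowsR1 hadamard_adj_mulmx // mxE c_i c'_j.
  by rewrite eq_sym (negbTE ne_ij) mulr0.
split=> //.
- exact: colsC_partition.
- by move=> i j; rewrite (inj_eq (colsC_inj m_gt0)).
- exact: card_colsC.
- by rewrite /rowsR setUC setUCr setIC setICr.
split=> // i a norm_a.
have -> : switch H i a = scale_block H (rowsR1 m n) (colsC m i) a by [].
apply: scale_block_hadamard norm_a _ (kron_hadamard hHm hHn) => c c' c_in c'_out.
apply: (block_orth i (kmod c')) => //.
  by apply: contraNneq c'_out => ->; rewrite in_colsC.
by rewrite in_colsC.
Qed.
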